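(* Let a WIFS satisfy the $\Phi$-FNC for an iteration rule $\Phi$. Then the map $\pi:\Omega^\infty\to K$ is Lipschitz with constant $1$ with respect to the metric $d$ on $\Omega^\infty$.
   Context: Setting. A weighted iterated function system (WIFS) $(S_i,p_i)_{i\in\mathcal I}$ consists of a finite index set $\mathcal I$, maps $S_i(x)=r_ix+d_i$ on $\mathbb R$ with $0<|r_i|<1$, and probabilities $p_i>0$ with $\sum_i p_i=1$. Its self-similar set $K$ is the unique nonempty compact set with $K=\bigcup_i S_i(K)$. Standing assumptions: $K$ is not a singleton and its convex hull is $[0,1]$. For a finite word $\sigma=\sigma_1\cdots\sigma_n$ over $\mathcal I$ (the set of all finite words, including the empty word, is $\mathcal I^*$) put $S_\sigma=S_{\sigma_1}\circ\cdots\circ S_{\sigma_n}$. Iteration rules and net intervals. Fix a total order on the affine bijections $x\mapsto ax+b$ ($a\ne0$) of $\mathbb R$. For a closed interval $J$ let $T_J(x)=rx+c$ ($r>0$) be the map with $T_J([0,1])=J$. An iteration rule $\Phi$ assigns to each finite strictly increasing tuple $v=(f_1,\dots,f_m)$ of such maps a tuple $\Phi(v)=(\mathcal C_1,\dots,\mathcal C_m)$ of finite subsets of $\mathcal I^*$ such that for each $i$ and all large $n$ every word of length $n$ has a unique prefix in $\mathcal C_i$. Children of a pair $(\Delta,v)$, $\Delta=[a,b]$: let $\mathcal Y=\{T_\Delta\circ f_i\circ S_\tau:1\le i\le m,\tau\in\mathcal C_i\}$ and list $\{a,b\}\cup\{g(z):g\in\mathcal Y,z\in\{0,1\},g(z)\in\Delta\}$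 as $a=y_1<\dots<y_{k+1}=b$; the children are the pairs $(\Delta',v')$ with $\Delta'=[y_j,y_{j+1}]$, $(y_j,y_{j+1})\cap K\ne\emptyset$, and $v'$ the increasing tuple of the distinct maps $T_{\Delta'}^{-1}\circ g$, $g\in\mathcal Y$, $g(K)\cap(y_j,y_{j+1})\ne\emptyset$. Let $\mathcal N_0=\{([0,1],(\mathrm{id}))\}$ and $\mathcal N_{n+1}$ the set of children of members of $\mathcal N_n$; for $(\Delta,v)\in\mathcal N_n$, $\Delta$ is a net interval of level $n$ with neighbour set $v$. $\Phi$ must also satisfy: (i) $\max\{r\,\mathrm{diam}\Delta:(\Delta,v)\in\mathcal N_n,(x\mapsto rx+c)\in v\}\to0$; (ii) if $f_1\neq f_2$ lie in a neighbour set then $f_1\circ S_\sigma\ne f_2$ for all $\sigma\in\mathcal I^*$. (Convention: a pair whose only child has the same interval is replaced by that child.) Transition graph. Children, their neighbour sets, relative positions and diameter ratios depend only on $v$. The transition graph $\mathcal G$ has as vertices the neighbour sets occurring, root $v_{\mathrm{root}}=(\mathrm{id})$, and one edge $e$ from $v$ to $v'$ for each child $(\Delta',v')$ of a pair $(\Delta,v)$ (distinguished by the relative position of $\Delta'$ in $\Delta$), with weight $W(e)=\mathrm{diam}\Delta'/\mathrm{diam}\Delta$; for a path $\eta=(e_1,\dots,e_n)$, $W(\eta)=\prod W(e_k)$. $\Omega^n,\Omega^\infty$ are the paths starting at $v_{\mathrm{root}}$ of length $n$, resp. infinite. Each $\eta\in\Omega^n$ corresponds bijectively to a net interval $\pi(\eta)$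 of level $n$ (following children), with $W(\eta)=\mathrm{diam}\,\pi(\eta)$. For $\gamma\in\Omega^\infty$, $\gamma|n$ is its length-$n$ prefix and $\pi(\gamma)$ is the unique point of $\bigcap_n\pi(\gamma|n)$. The WIFS satisfies the $\Phi$-FNC if $\mathcal G$ is finite. The metric on $\Omega^\infty$ is $d(\gamma_1,\gamma_2)=\inf\{W(\eta):\eta$ a common prefix of $\gamma_1$ and $\gamma_2\}$. *)

From Stdlib Require Import Reals Lra List.
From Coquelicot Require Import Rbar Lub.
Import ListNotations.
Open Scope R_scope.
Set Implicit Arguments.

Record WIFS := mkWIFS {
  Idx : Type;
  enumI : list Idx;
  ratio : Idx -> R;
  shift : Idx -> R;
  prob  : Idx -> R;
  enumI_nodup : NoDup enumI;
  enumI_full  : forall i, In i enumI;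
  ratio_ok    : forall i, 0 < Rabs (ratio i) < 1;
  prob_pos    : forall i, 0 < prob i;
  prob_sum    : fold_right Rplus 0 (map prob enumI) = 1 }.

(* affine maps x |-> a x + b represented by (a, b) *)
Definition Aff := (R * R)%type.
Definition app (f : Aff) (x : R) : R := fst f * x + snd f.
Definition comp (f g : Aff) : Aff := (fst f * fst g, fst f * snd g + snd f).
Definition idA : Aff := (1, 0).
(* closed interval [a,b] as the pair (a,b) *)
Definition Intv := (R * R)%type.
(* T_J with T_J([0,1]) = J, and its inverse *)
Definition TJ (J : Intv) : Aff := (snd J - fst J, fst J).
Definition TJinv (J : Intv) : Aff :=
  (/ (snd J - fst J), - fst J / (snd J - fst J)).

(* neighbour sets: (finite) sets of affine maps *)
Definition Vset := Aff -> Prop.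
Definition SameSet (v w : Vset) : Prop := forall f, v f <-> w f.
Definition FiniteSet (v : Vset) : Prop := exists l, forall f, v f <-> In f l.
Definition Pair := (Intv * Vset)%type.

Definition SelfSimilar (W : WIFS) (K : R -> Prop) : Prop :=
  (exists x, K x) /\ compact K /\
  (forall x, K x <-> exists i y, K y /\ x = ratio W i * y + shift W i).
Definition Standing (K : R -> Prop) : Prop :=
  (exists x y, K x /\ K y /\ x <> y) /\
  K 0 /\ K 1 /\ (forall x, K x -> 0 <= x <= 1).

Definition IsPrefix {A : Type} (tau w : list A) : Prop := exists u, w = tau ++ u.

Section Net.
Variable W : WIFS.
Variable K : R -> Prop.
(* iteration rule: for a neighbour set v and a member f of v, the finite set C_f *)
Variable Phi : Vset -> Aff -> list (list (Idx W)).

Definition Smap (i : Idx W) : Aff := (ratio W i, shift W i).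
Fixpoint Sw (s : list (Idx W)) : Aff :=
  match s with [] => idA | i :: s' => comp (Smap i) (Sw s') end.

Definition Ymap (D : Intv) (v : Vset) (g : Aff) : Prop :=
  exists f tau, v f /\ In tau (Phi v f) /\ g = comp (TJ D) (comp f (Sw tau)).

Definition NetPt (D : Intv) (v : Vset) (y : R) : Prop :=
  y = fst D \/ y = snd D \/
  exists g z, Ymap D v g /\ (z = 0 \/ z = 1) /\ y = app g z /\ fst D <= y <= snd D.

(* raw children (before applying the replacement convention) *)
Definition RawChild (p q : Pair) : Prop :=
  let D := fst p in let v := snd p in let D' := fst q in
  NetPt D v (fst D') /\ NetPt D v (snd D') /\ fst D' < snd D' /\
  (~ exists w, NetPt D v w /\ fst D' < w < snd D') /\
  (exists x, K x /\ fst D' < x < snd D') /\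
  (forall h, snd q h <->
     exists g, Ymap D v g /\ (exists x, K x /\ fst D' < app g x < snd D') /\
               h = comp (TJinv D') g).

Definition SameOnly (p : Pair) : Prop :=
  exists c, RawChild p c /\ fst c = fst p /\
            forall c', RawChild p c' -> fst c' = fst p.

(* the convention: replace such a pair by its only child, repeatedly *)
Inductive Reduce : Pair -> Pair -> Prop :=
| red_stop p : ~ SameOnly p -> Reduce p p
| red_step p c q : RawChild p c -> fst c = fst p ->
    (forall c', RawChild p c' -> fst c' = fst p) -> Reduce c q -> Reduce p q.

Definition Child (p q : Pair) : Prop := exists c, RawChild p c /\ Reduce c q.

Definition vroot : Vset := fun f => f = idA.

Inductive NetAt : nat -> Pair -> Prop :=
| net0 : NetAt 0 ((0, 1), vroot)
| netS n p q : NetAt n p -> Child p q -> NetAt (S n) q.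

Definition RuleCover : Prop :=
  forall v, FiniteSet v -> (forall f, v f -> fst f <> 0) ->
  forall f, v f -> exists N, forall n, (N <= n)%nat ->
    forall w : list (Idx W), length w = n ->
      exists tau, In tau (Phi v f) /\ IsPrefix tau w /\
        forall tau', In tau' (Phi v f) -> IsPrefix tau' w -> tau' = tau.
Definition RuleShrink : Prop :=
  forall eps, 0 < eps -> exists N, forall n p f, (N <= n)%nat ->
    NetAt n p -> snd p f -> Rabs (fst f) * (snd (fst p) - fst (fst p)) < eps.
Definition RuleSep : Prop :=
  forall n p f1 f2, NetAt n p -> snd p f1 -> snd p f2 -> f1 <> f2 ->
    forall sigma, comp f1 (Sw sigma) <> f2.
Definition IterationRule : Prop := RuleCover /\ RuleShrink /\ RuleSep.

Definition FNC : Prop :=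
  exists L : list Vset, forall n p, NetAt n p -> exists w, In w L /\ SameSet (snd p) w.

(* transition graph: edge = (source, target, relative position of Delta' in Delta) *)
Definition Edge := (Vset * Vset * Intv)%type.
Definition IsEdge (e : Edge) : Prop :=
  exists n D v D' v', NetAt n (D, v) /\ Child (D, v) (D', v') /\
    SameSet (fst (fst e)) v /\ SameSet (snd (fst e)) v' /\
    snd e = ((fst D' - fst D) / (snd D - fst D), (snd D' - fst D) / (snd D - fst D)).

(* Omega^infty : infinite paths starting at the root *)
Definition InfPath (g : nat -> Edge) : Prop :=
  SameSet (fst (fst (g 0%nat))) vroot /\
  forall k, IsEdge (g k) /\ SameSet (snd (fst (g k))) (fst (fst (g (S k)))).

End Net.

Definition EdgeEq (e1 e2 : Edge) : Prop :=
  SameSet (fst (fst e1)) (fst (fst e2)) /\ SameSet (snd (fst e1)) (snd (fst e2)) /\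
  snd e1 = snd e2.
Definition CommonPrefix (g1 g2 : nat -> Edge) (n : nat) : Prop :=
  forall k, (k < n)%nat -> EdgeEq (g1 k) (g2 k).
Definition EdgeW (e : Edge) : R := snd (snd e) - fst (snd e).
Fixpoint PathW (g : nat -> Edge) (n : nat) : R :=
  match n with 0 => 1 | S m => PathW g m * EdgeW (g m) end.
(* pi(g|n): net interval obtained by following the relative positions *)
Fixpoint PathInt (g : nat -> Edge) (n : nat) : Intv :=
  match n with
  | 0 => (0, 1)
  | S m => let J := PathInt g m in let st := snd (g m) in
           (fst J + fst st * (snd J - fst J), fst J + snd st * (snd J - fst J))
  end.
(* x = pi(g) : x lies in every pi(g|n) *)
Definition IsPi (g : nat -> Edge) (x : R) : Prop :=
  forall n, fst (PathInt g n) <= x <= snd (PathInt g n).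
Definition pathDist (g1 g2 : nat -> Edge) : Rbar :=
  Glb_Rbar (fun w => exists n, CommonPrefix g1 g2 n /\ w = PathW g1 n).

(* Both x1 and x2 lie in the net interval pi(eta) of every common prefix eta
   of g1 and g2, and that interval has diameter W(eta); so |x1 - x2| is a
   lower bound of the weights defining d. *)
From Stdlib Require Import Reals Lra Lia.
From Coquelicot Require Import Rbar Lub.
Open Scope R_scope.
Set Implicit Arguments.

Lemma PathInt_ext (g1 g2 : nat -> Edge) (n : nat) :
  (forall k, (k < n)%nat -> snd (g1 k) = snd (g2 k)) ->
  PathInt g1 n = PathInt g2 n.
Proof.
  induction n as [|n IH]; intros Hpos; simpl; [reflexivity|].
  rewrite IH by (intros k Hk; apply Hpos; lia).
  rewrite (Hpos n) by lia.
  reflexivity.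
Qed.

Lemma PathInt_common_prefix (g1 g2 : nat -> Edge) (n : nat) :
  CommonPrefix g1 g2 n -> PathInt g1 n = PathInt g2 n.
Proof.
  intros Hpre; apply PathInt_ext; intros k Hk; apply (Hpre k Hk).
Qed.

Lemma PathInt_diam (g : nat -> Edge) (n : nat) :
  snd (PathInt g n) - fst (PathInt g n) = PathW g n.
Proof.
  induction n as [|n IH]; simpl; [ring|].
  rewrite <- IH; unfold EdgeW; ring.
Qed.

Lemma Rabs_sub_le_interval (a b x y : R) :
  a <= x <= b -> a <= y <= b -> Rabs (x - y) <= b - a.
Proof.
  intros Hx Hy; apply Rabs_le; lra.
Qed.

Lemma IsPi_dist_le_PathW (g1 g2 : nat -> Edge) (x1 x2 : R) (n : nat) :
  IsPi g1 x1 -> IsPi g2 x2 -> CommonPrefix g1 g2 n ->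
  Rabs (x1 - x2) <= PathW g1 n.
Proof.
  intros H1 H2 Hpre.
  rewrite <- PathInt_diam.
  apply Rabs_sub_le_interval; [apply H1|].
  rewrite (PathInt_common_prefix Hpre); apply H2.
Qed.

Theorem lemma5p1 (W : WIFS) (K : R -> Prop) (Phi : Vset -> Aff -> list (list (Idx W))) :
  SelfSimilar W K -> Standing K ->
  IterationRule W K Phi -> FNC W K Phi ->
  forall g1 g2 : nat -> Edge, InfPath W K Phi g1 -> InfPath W K Phi g2 ->
  forall x1 x2 : R, IsPi g1 x1 -> IsPi g2 x2 ->
  Rbar_le (Finite (Rabs (x1 - x2))) (pathDist g1 g2).
Proof.
  intros _ _ _ _ g1 g2 _ _ x1 x2 H1 H2.
  apply Glb_Rbar_correct.
  intros w [n [Hpre ->]].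
  exact (IsPi_dist_le_PathW H1 H2 Hpre).
Qed.
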